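(* Let $d, N, r$ be positive integers, let $\|\cdot\|$ be any norm on $\mathbb{R}^d$ with unit ball $B = \{v \in \mathbb{R}^d : \|v\| \le 1\}$, and let $V_1, \dots, V_N$ be finite subsets of $B$ with $|V_i| \ge r$ for all $i \in [N]$. Then there is an $r$-selection $\chi$ of $(V_i)_{i\in[N]}$ with \[ \max_{n \in [N]} \max_{\ell \in [r]} \Big\| \sum_{i \in [n]} \Big( \chi(i,\ell) - \frac{1}{|V_i|} \sum_{v \in V_i} v \Big) \Big\| \le 5d. \]
   Context: $[n] = \{1, \dots, n\}$. An $r$-selection of $(V_i)_{i \in [N]}$ is a mapping $\chi : [N] \times [r] \to \mathbb{R}^d$ such that for every $i \in [N]$ the set $\chi(i,[r]) = \{\chi(i,\ell) : \ell \in [r]\}$ is an $r$-element subset of $V_i$ (so $\chi(i,1),\dots,\chi(i,r)$ are $r$ distinct elements of $V_i$). *)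

From HB Require Import structures.
From mathcomp Require Import all_boot all_order all_algebra.
From mathcomp Require Import reals.
From mathcomp Require Import finmap.
Set Implicit Arguments. Unset Strict Implicit. Unset Printing Implicit Defensive.
Import Order.TTheory GRing.Theory Num.Theory.
Local Open Scope ring_scope.

Definition is_norm (R : realType) (d : nat) (nrm : 'rV[R]_d -> R) : Prop :=
  [/\ forall v, 0 <= nrm v,
      forall v, nrm v = 0 -> v = 0,
      forall (a : R) v, nrm (a *: v) = `|a| * nrm v
    & forall u v, nrm (u + v) <= nrm u + nrm v].

Definition r_selection (R : realType) (d N r : nat)
  (V : 'I_N -> {fset 'rV[R]_d}) (chi : 'I_N -> 'I_r -> 'rV[R]_d) : Prop :=
  forall i : 'I_N, injective (chi i) /\ forall l : 'I_r, chi i l \in V i.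

Definition fset_mean (R : realType) (d : nat) (V : {fset 'rV[R]_d}) : 'rV[R]_d :=
  (#|` V|%:R)^-1 *: \sum_(v <- V) v.

(* Iterated rounding.  For sizes s_i <= |T_i|, the fractional choice
   y i v = s_i / |T_i| has weighted prefix sums \sum_(i < j) \sum_v y i v *: v
   equal to the targets \sum_(i < j) s_i *: mean T_i.  Rows are released one at
   a time; after releasing row k, y is pushed along directions preserving the
   row sums and the weighted sum of the released rows until at most 2d entries
   of released rows are fractional.  That such directions exist is a dimension
   count: a row with integral sum never has exactly one fractional entry.  A
   last rounding with no vector constraint makes y a 0/1 vector, and since
   rounding only moves fractional entries, every prefix ends within 2d of its
   target.  This yields subsets of prescribed sizes with prefix discrepancy 2d.
   An r-selection is then built by recursive halving: shrink each V_i to a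
   balanced r-subset, split that into balanced halves of sizes ceil(r/2) and
   floor(r/2), and recurse.  Replacing the mean of a part of size m by the mean
   of its parent costs 2d/m, and along any chain of halvings these costs add up
   to at most 5d. *)

From HB Require Import structures.
From mathcomp Require Import all_boot all_order all_algebra.
From mathcomp Require Import finmap reals.
From mathcomp Require Import zify lra.
From Stdlib Require Import Classical.
Set Implicit Arguments. Unset Strict Implicit. Unset Printing Implicit Defensive.
Import Order.TTheory GRing.Theory Num.Theory.
Local Open Scope ring_scope.

Lemma exists_argmin_seq (disp : Order.disp_t) (O : orderType disp) (T : eqType)
    (f : T -> O) (s : seq T) x0 :
  x0 \in s -> exists2 x, x \in s & forall y, y \in s -> (f x <= f y)%O.
Proof.
elim: s x0 => // a [|b s] IH x0 _.
  by exists a => [|y]; rewrite ?mem_head // inE => /eqP ->.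
have [x xs xmin] := IH b (mem_head _ _).
have [fax|fxa] := leP (f a) (f x).
  exists a => [|y]; first exact: mem_head.
  by rewrite inE => /predU1P [->|/xmin]; [|exact: le_trans].
exists x => [|y]; first by rewrite inE xs orbT.
by rewrite inE => /predU1P [->|/xmin]; [exact: ltW|].
Qed.

Lemma sub_count_lt (T : eqType) (a b : pred T) (s : seq T) x :
  subpred a b -> x \in s -> b x -> ~~ a x -> (count a s < count b s)%N.
Proof.
move=> sab; elim: s => [//|c s IH] /=; rewrite inE => /predU1P [<-|xs] bx ax.
  by rewrite bx (negPf ax) add0n add1n ltnS sub_count.
have lt_ab := IH xs bx ax; case ac: (a c); first by rewrite (sab _ ac) ltn_add2l.
by rewrite add0n (leq_trans lt_ab) ?leq_addl.
Qed.

Lemma ltn_sum_at (I : finType) (P : pred I) (E1 E2 : I -> nat) j :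
  P j -> (E1 j < E2 j)%N -> (forall i, P i -> E1 i <= E2 i)%N ->
  (\sum_(i | P i) E1 i < \sum_(i | P i) E2 i)%N.
Proof.
move=> Pj lt12 le12; rewrite (bigD1 j) // (bigD1 j (F := E2)) //= -addSn leq_add //.
by apply: leq_sum => i /andP [Pi _]; exact: le12.
Qed.

Lemma exists_nontrivial_relation (F : fieldType) (D : nat) (T : eqType)
    (s : seq T) (f : T -> 'rV[F]_D) :
  uniq s -> (D < size s)%N ->
  exists k : T -> F, \sum_(x <- s) k x *: f x = 0 /\ exists2 x, x \in s & k x != 0.
Proof.
move=> s_uniq D_lt.
have [x0 _] : exists x0, x0 \in s.
  by case: s D_lt {s_uniq} => // x s _; exists x; exact: mem_head.
pose X := [tuple f (nth x0 s i) | i < size s].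
have X_dependent : ~~ free X.
  rewrite /free size_tuple neq_ltn (leq_ltn_trans _ D_lt) //.
  by rewrite (leq_trans (dimvS (subvf _))) // dimvf dim_matrix mul1r.
apply: NNPP => no_relation; move/freeP: X_dependent; apply => k k_rel i.
apply/eqP/negP => k_i; apply: no_relation.
have kE (j : 'I_(size s)) : k (insubd i (index (nth x0 s j) s)) = k j.
  by congr k; apply: val_inj; rewrite insubdK; rewrite ?unfold_in /= index_uniq.
exists (fun x => k (insubd i (index x s))); split.
  rewrite -[in RHS]k_rel (big_nth x0) big_mkord; apply: eq_bigr => j _.
  by rewrite kE nth_mktuple.
by exists (nth x0 s i); [rewrite mem_nth | rewrite kE; apply/negP].
Qed.

Lemma sum_01_natr (R : pzSemiRingType) (J : eqType) (r : seq J) (P : pred J)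
    (F : J -> R) :
  (forall j, j \in r -> P j -> (F j == 0) || (F j == 1)) ->
  exists c : nat, \sum_(j <- r | P j) F j = c%:R.
Proof.
move=> F01; rewrite big_seq_cond.
apply: (big_ind (fun x => exists c : nat, x = c%:R)); first by exists 0%N.
  by move=> _ _ [a ->] [b ->]; exists (a + b)%N; rewrite natrD.
move=> j /andP [jr Pj].
by case/orP: (F01 j jr Pj) => /eqP ->; [exists 0%N | exists 1%N].
Qed.

Lemma sum_indicator (R : pzSemiRingType) (J : eqType) (r : seq J) w :
  uniq r -> w \in r -> \sum_(v <- r) (v == w)%:R = 1 :> R.
Proof.
move=> r_uniq wr; rewrite (bigD1_seq w) //= eqxx big1 ?addr0 //.
by move=> v /negPf ->.
Qed.

Lemma sum_indicator_scale (R : pzRingType) (V : lmodType R) (J : eqType) (r : seq J) w (h : J -> V) :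
  uniq r -> w \in r -> \sum_(v <- r) (v == w)%:R *: h v = h w.
Proof.
move=> r_uniq wr; rewrite (bigD1_seq w) //= eqxx scale1r big1 ?addr0 //.
by move=> v /negPf ->; rewrite scale0r.
Qed.

Section Rounding.
Variables (R : realFieldType) (I : finType) (X : choiceType).
Variables (T : I -> {fset X}) (s : I -> nat).
Implicit Types (A : pred I) (y z : I -> X -> R).

Definition fractional (x : R) := 0 < x < 1.

Lemma nonfractional01 (x : R) : 0 <= x <= 1 -> ~~ fractional x -> (x == 0) || (x == 1).
Proof.
case/andP => x_ge0 x_le1; rewrite negb_and -!leNgt.
by case/orP => x_lim; apply/orP; [left|right]; rewrite eq_le x_lim ?x_ge0 ?x_le1.
Qed.

Lemma fractional_addn_neq (x : R) (a b : nat) : fractional x -> x + a%:R != b%:R.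
Proof.
case/andP => x_gt0 x_lt1; apply/eqP => e; have [ba|ab] := leqP b a.
  have : (b%:R <= a%:R :> R) by rewrite ler_nat.
  lra.
have : ((a.+1)%:R <= b%:R :> R) by rewrite ler_nat.
rewrite -natr1; lra.
Qed.

Definition in_box y := forall i v, v \in T i -> 0 <= y i v <= 1.

Definition has_row_sums y := forall i, \sum_(v <- T i) y i v = (s i)%:R.

Definition nfrac A y := (\sum_(i | A i) count (fun v => fractional (y i v)) (T i))%N.

Definition wsum D A (g : I -> X -> 'rV[R]_D) y :=
  \sum_(i | A i) \sum_(v <- T i) y i v *: g i v.

Definition refines A y' y :=
  forall i v, v \in T i -> ~~ (A i && fractional (y i v)) -> y' i v = y i v.

Lemma refines_trans A y'' y' y : refines A y'' y' -> refines A y' y -> refines A y'' y.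
Proof.
move=> h2 h1 i v vT nf; have e := h1 i v vT nf.
by rewrite h2 // e.
Qed.

Lemma refinesT A y' y : refines A y' y -> refines predT y' y.
Proof. by move=> h i v vT nf; apply: h => //; apply: contra nf => /andP []. Qed.

Definition add_scaled y (t : R) z i v := y i v + t * z i v.

Lemma wsum_add_scaled D A (g : I -> X -> 'rV[R]_D) y t z :
  wsum A g (add_scaled y t z) = wsum A g y + t *: wsum A g z.
Proof.
rewrite /wsum scaler_sumr -big_split; apply: eq_bigr => i _.
rewrite scaler_sumr -big_split; apply: eq_bigr => v _.
by rewrite scalerDl scalerA.
Qed.

Lemma nfrac_eq0 A y : in_box y -> nfrac A y = 0%N ->
  forall i v, A i -> v \in T i -> (y i v == 0) || (y i v == 1).
Proof.
move=> ybox /eqP; rewrite sum_nat_eq0 => /forall_inP nfrac0 i v Ai vT.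
apply: nonfractional01; first exact: ybox.
have : ~~ has (fun v => fractional (y i v)) (T i) by rewrite has_count (eqP (nfrac0 i Ai)).
by move/hasPn; apply.
Qed.

Lemma count_fractional_neq1 y i : in_box y -> has_row_sums y ->
  count (fun v => fractional (y i v)) (T i) != 1%N.
Proof.
move=> ybox yrows; rewrite -size_filter; apply/eqP.
case fracs: [seq v <- T i | fractional (y i v)] => [|w [|]] // _.
have : w \in [seq v <- T i | fractional (y i v)] by rewrite fracs mem_head.
rewrite mem_filter => /andP [fw wT].
have [c c_sum] : exists c : nat, \sum_(v <- T i | ~~ fractional (y i v)) y i v = c%:R.
  by apply: sum_01_natr => v vT; apply: nonfractional01; exact: ybox.
have := yrows i; rewrite (bigID (fun v => fractional (y i v))) /= -big_filter fracs.
by rewrite big_seq1 c_sum => /eqP; apply/negP/fractional_addn_neq.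
Qed.


Section Direction.
Variables (D : nat) (A : pred I) (g : I -> X -> 'rV[R]_D) (y : I -> X -> R).
Hypotheses (ybox : in_box y) (yrows : has_row_sums y).

(* In an active row, each fractional entry v other than the first one (the
   pivot) gives the direction "move mass from the pivot to v".  These
   directions keep every row sum, and there are at least half as many of them
   as fractional entries. *)
Let fracs i := [seq v <- T i | fractional (y i v)].
Let dirs := [seq (i, v) | i <- enum A, v <- behead (fracs i)].
Let pivot (p : I * X) := head p.2 (fracs p.1).
Let delta (p : I * X) i v : R :=
  (p.1 == i)%:R * ((v == p.2)%:R - (v == pivot p)%:R).
Let phi (p : I * X) := g p.1 p.2 - g p.1 (pivot p).

Let fracs_uniq i : uniq (fracs i).
Proof. exact/filter_uniq/fset_uniq. Qed.

Let mem_dirs p : p \in dirs ->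
  [/\ A p.1, p.2 \in fracs p.1, pivot p \in fracs p.1 & p.2 != pivot p].
Proof.
case/allpairsPdep => i [v [iA vF ->]] /=; rewrite mem_enum in iA; rewrite /pivot /=.
have := fracs_uniq i; case: (fracs i) vF => //= w l vl /andP [wl _].
by split; rewrite ?inE ?eqxx ?vl ?orbT //; apply: contraNneq wl => <-.
Qed.

Let pivot_row p q : p \in dirs -> p.1 = q.1 -> pivot p = pivot q.
Proof. by case/mem_dirs => _ pF _ _ e; rewrite /pivot -e; case: (fracs p.1) pF. Qed.

Let dirs_uniq : uniq dirs.
Proof.
apply: allpairs_uniq_dep; first exact: enum_uniq.
  by move=> i _; have := fracs_uniq i; case: (fracs i) => //= w l /andP [].
by move=> [i v] [j w] _ _ /= [-> ->].
Qed.

Let nfrac_le_dirs : (nfrac A y <= 2 * size dirs)%N.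
Proof.
rewrite size_allpairs_dep sumnE big_map big_enum /= /nfrac big_distrr /=.
apply: leq_sum => i _; rewrite -size_filter -/(fracs i) size_behead.
have := count_fractional_neq1 i ybox yrows; rewrite -size_filter -/(fracs i).
by case: (size (fracs i)) => [|[|n]] //= _; lia.
Qed.

Let delta_support p i v : p \in dirs -> delta p i v != 0 -> A i && (v \in fracs i).
Proof.
case/mem_dirs => Ap pF pivF _; rewrite /delta.
have [<-|] := eqVneq p.1 i; last by rewrite mul0r eqxx.
have [->|_] := eqVneq v p.2; first by rewrite Ap pF.
by have [->|_] := eqVneq v (pivot p); rewrite ?Ap ?pivF // subrr mulr0 eqxx.
Qed.

Let delta_dirs p q : p \in dirs -> q \in dirs -> delta q p.1 p.2 = (q == p)%:R.
Proof.
move=> pd qd; rewrite /delta; have [e|ne] := eqVneq q.1 p.1; last first.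
  by rewrite mul0r; case: eqP => // qp; move: ne; rewrite qp eqxx.
have [_ _ _ piv] := mem_dirs pd.
rewrite (pivot_row qd e) (negPf piv) subr0 mul1r.
by rewrite [q]surjective_pairing [p]surjective_pairing xpair_eqE e eqxx eq_sym.
Qed.

Let delta_row p i : p \in dirs -> \sum_(v <- T i) delta p i v = 0.
Proof.
case/mem_dirs => _ pF pivF _; rewrite /delta -mulr_sumr.
have [<-|_] := eqVneq p.1 i; last by rewrite mul0r.
rewrite sumrB !sum_indicator ?subrr ?mulr0 //; try exact: fset_uniq.
  by move: pivF; rewrite mem_filter => /andP [].
by move: pF; rewrite mem_filter => /andP [].
Qed.

Let delta_wsum p : p \in dirs -> wsum A g (delta p) = phi p.
Proof.
case/mem_dirs => Ap pF pivF _; rewrite /wsum (bigD1 p.1) //= [X in _ + X]big1 ?addr0; last first.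
  move=> i /andP [_ ip]; apply: big1 => v _.
  by rewrite /delta eq_sym (negPf ip) mul0r scale0r.
under eq_bigr do rewrite /delta eqxx mul1r scalerBl.
rewrite sumrB !sum_indicator_scale //; try exact: fset_uniq.
  by move: pivF; rewrite mem_filter => /andP [].
by move: pF; rewrite mem_filter => /andP [].
Qed.

Lemma exists_direction : (2 * D < nfrac A y)%N ->
  exists z : I -> X -> R, [/\
    forall i v, z i v != 0 -> A i && fractional (y i v),
    exists i, exists2 v, v \in T i & z i v != 0,
    forall i, \sum_(v <- T i) z i v = 0
  & wsum A g z = 0].
Proof.
move=> many_frac.
have [k [k_rel [p pd kp]]] : exists k : I * X -> R,
    \sum_(q <- dirs) k q *: phi q = 0 /\ exists2 p, p \in dirs & k p != 0.
  apply: exists_nontrivial_relation dirs_uniq _.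
  by rewrite -(ltn_pmul2l (isT : 0 < 2)%N) (leq_trans many_frac).
exists (fun i v => \sum_(q <- dirs) k q * delta q i v); split.
- move=> i v; apply: contraNT => inactive; apply/eqP.
  rewrite big_seq; apply: big1 => q qd.
  have [->|/(delta_support qd)] := eqVneq (delta q i v) 0; first by rewrite mulr0.
  by rewrite mem_filter => /andP [iA /andP [fv _]]; move: inactive; rewrite iA fv.
- have [_ pF _ _] := mem_dirs pd; exists p.1, p.2.
    by move: pF; rewrite mem_filter => /andP [].
  rewrite big_seq (eq_bigr (fun q => k q * (q == p)%:R)); last first.
    by move=> q qd; rewrite delta_dirs.
  by rewrite -big_seq (bigD1_seq p) //= eqxx mulr1 big1 ?addr0 // => q /negPf ->; rewrite mulr0.
- move=> i; rewrite exchange_big /= big_seq big1 // => q qd.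
  by rewrite -mulr_sumr delta_row ?mulr0.
- rewrite -k_rel [RHS]big_seq [RHS](eq_bigr (fun q => k q *: wsum A g (delta q))).
    rewrite -big_seq /wsum; under [RHS]eq_bigr do rewrite scaler_sumr.
    rewrite [RHS]exchange_big /=; apply: eq_bigr => i _.
    under [RHS]eq_bigr do rewrite scaler_sumr.
    rewrite [RHS]exchange_big /=; apply: eq_bigr => v _.
    by rewrite scaler_suml; apply: eq_bigr => q _; rewrite scalerA.
  by move=> q qd; rewrite delta_wsum.
Qed.

End Direction.

Section LineSearch.
Variables (A : pred I) (y z : I -> X -> R).
Hypotheses (ybox : in_box y) (zsupp : forall i v, z i v != 0 -> A i && fractional (y i v)).

Let cand := [seq p <- [seq (i, v) | i <- enum I, v <- T i] | z p.1 p.2 != 0].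

Let mem_cand p : p \in cand = (z p.1 p.2 != 0) && (p.2 \in T p.1).
Proof.
rewrite mem_filter; congr (_ && _); apply/allpairsPdep/idP => [[i [v [_ vT ->]]] //|].
by move=> pT; exists p.1, p.2; rewrite mem_enum -surjective_pairing.
Qed.

(* The step along z after which entry p reaches 0 or 1. *)
Let step (p : I * X) :=
  (if 0 < z p.1 p.2 then 1 - y p.1 p.2 else - y p.1 p.2) / z p.1 p.2.

Let stepK p : z p.1 p.2 != 0 ->
  step p * z p.1 p.2 = if 0 < z p.1 p.2 then 1 - y p.1 p.2 else - y p.1 p.2.
Proof. by move=> zp; rewrite divfK. Qed.

Let step_gt0 p : p \in cand -> 0 < step p.
Proof.
rewrite mem_cand => /andP [zp _]; have /andP [_ /andP [y_gt0 y_lt1]] := zsupp zp.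
rewrite /step; case: ifP => z_gt0; first by rewrite divr_gt0 // subr_gt0.
have z_lt0 : z p.1 p.2 < 0 by rewrite lt_neqAle zp leNgt z_gt0.
by rewrite -mulrNN opprK -invrN mulr_gt0 // invr_gt0 oppr_gt0.
Qed.

Let in_box_add_scaled t : 0 < t -> (forall p, p \in cand -> t <= step p) ->
  in_box (add_scaled y t z).
Proof.
move=> t_gt0 t_le i v vT; have /andP [y_ge0 y_le1] := ybox vT; rewrite /add_scaled.
have [z0|zv] := eqVneq (z i v) 0; first by rewrite z0 mulr0 addr0 y_ge0.
have t_le_iv : t <= step (i, v) by apply: t_le; rewrite mem_cand zv.
have := @stepK (i, v) zv; rewrite /=; case: ifP => z_gt0 e.
  have : t * z i v <= step (i, v) * z i v by rewrite ler_pM2r.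
  have : 0 <= t * z i v by rewrite mulr_ge0 // ltW.
  by rewrite e => *; apply/andP; split; lra.
have z_lt0 : z i v < 0 by rewrite lt_neqAle zv leNgt z_gt0.
have : step (i, v) * z i v <= t * z i v by rewrite ler_nM2r.
have : t * z i v <= 0 by rewrite mulr_ge0_le0 // ltW.
by rewrite e => *; apply/andP; split; lra.
Qed.

Let nfrac_add_scaled p : p \in cand -> (nfrac A (add_scaled y (step p) z) < nfrac A y)%N.
Proof.
rewrite mem_cand => /andP [zp pT]; have /andP [Ap fp] := zsupp zp.
have frac_new i : subpred (fun v => fractional (add_scaled y (step p) z i v))
                          (fun v => fractional (y i v)).
  move=> v; rewrite /add_scaled; have [->|zv] := eqVneq (z i v) 0; first by rewrite mulr0 addr0.
  by have /andP [] := zsupp zv.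
apply: (ltn_sum_at Ap) => [|i _]; last exact: sub_count.
apply: (sub_count_lt (frac_new p.1) pT fp); rewrite /add_scaled (@stepK p zp).
by case: ifP => _; rewrite /fractional ?(addrC _ (1 - _)) ?subrK ?subrr ltxx ?andbF.
Qed.

Lemma line_search : (exists i, exists2 v, v \in T i & z i v != 0) ->
  exists t, in_box (add_scaled y t z) /\ (nfrac A (add_scaled y t z) < nfrac A y)%N.
Proof.
move=> [i0 [v0 v0T zv0]].
have [p pc pmin] : exists2 p, p \in cand & forall q, q \in cand -> step p <= step q.
  by apply: (exists_argmin_seq _ (x0 := (i0, v0))); rewrite mem_cand zv0.
by exists (step p); split; [apply: in_box_add_scaled (step_gt0 pc) pmin | exact: nfrac_add_scaled].
Qed.

End LineSearch.

Lemma round_step D A (g : I -> X -> 'rV[R]_D) y :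
  in_box y -> has_row_sums y -> (2 * D < nfrac A y)%N ->
  exists y', [/\ in_box y', has_row_sums y', wsum A g y' = wsum A g y,
                 refines A y' y & (nfrac A y' < nfrac A y)%N].
Proof.
move=> ybox yrows many_frac.
have [z [zsupp znz zrows zw]] := exists_direction g ybox yrows many_frac.
have [t [box' fewer]] := line_search ybox zsupp znz.
exists (add_scaled y t z); split => //.
- by move=> i; rewrite big_split /= -mulr_sumr zrows mulr0 addr0.
- by rewrite wsum_add_scaled zw scaler0 addr0.
- move=> i v _ inactive; rewrite /add_scaled.
  have [->|/zsupp] := eqVneq (z i v) 0; first by rewrite mulr0 addr0.
  by move=> active; rewrite active in inactive.
Qed.

Lemma round D A (g : I -> X -> 'rV[R]_D) y :
  in_box y -> has_row_sums y ->
  exists y', [/\ in_box y', has_row_sums y', wsum A g y' = wsum A g y,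
                 refines A y' y & (nfrac A y' <= 2 * D)%N].
Proof.
have [m] := ubnP (nfrac A y); elim: m y => // m IH y y_lt ybox yrows.
have [few|many] := leqP (nfrac A y) (2 * D); first by exists y; split => // i v.
have [y1 [box1 rows1 w1 ref1 lt1]] := round_step g ybox yrows many.
have [y2 [box2 rows2 w2 ref2 few2]] := IH y1 (leq_trans lt1 y_lt) box1 rows1.
by exists y2; split => //; [rewrite w2 | exact: refines_trans ref1].
Qed.

End Rounding.

Lemma sum_fset_indicator (R : nzRingType) (V : lmodType R) (X : choiceType)
    (A : {fset X}) (f : X -> R) (h : X -> V) :
  (forall v, v \in A -> (f v == 0) || (f v == 1)) ->
  \sum_(v <- [fset v in A | f v == 1]%fset) h v = \sum_(v <- A) f v *: h v.
Proof.
move=> f01; rewrite -big_fset_condE big_mkcond /= big_seq [RHS]big_seq.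
apply: eq_bigr => v vA; case/orP: (f01 v vA) => /eqP ->; rewrite ?eqxx ?scale1r //.
by rewrite eq_sym oner_eq0 scale0r.
Qed.

Lemma sum_prefixS (V : nmodType) (N k : nat) (lt_kN : (k < N)%N) (F : 'I_N -> V) :
  \sum_(i < N | (i < k.+1)%N) F i = \sum_(i < N | (i < k)%N) F i + F (Ordinal lt_kN).
Proof.
rewrite (bigD1 (Ordinal lt_kN)) //= addrC; congr (_ + _).
by apply: eq_bigl => i; rewrite -(inj_eq val_inj) /= ltnS ltn_neqAle andbC.
Qed.

Lemma fset_sum_mean (R : realType) (d : nat) (A : {fset 'rV[R]_d}) :
  \sum_(v <- A) v = #|` A|%:R *: fset_mean A.
Proof.
rewrite /fset_mean scalerA; have [A0|A_gt0] := posnP #|` A|.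
  by move/eqP: A0; rewrite cardfs_eq0 => /eqP ->; rewrite big_seq_fset0 scaler0.
by rewrite mulfV ?scale1r // pnatr_eq0 -lt0n A_gt0.
Qed.

Section Norm.
Variables (R : realType) (d : nat) (nrm : 'rV[R]_d -> R).
Hypothesis nrm_norm : is_norm nrm.

Lemma nrm_ge0 v : 0 <= nrm v.
Proof. by case: nrm_norm. Qed.

Lemma nrmZ a v : nrm (a *: v) = `|a| * nrm v.
Proof. by case: nrm_norm. Qed.

Lemma nrm0 : nrm 0 = 0.
Proof. by rewrite -(scale0r (0 : 'rV[R]_d)) nrmZ normr0 mul0r. Qed.

Lemma nrmN v : nrm (- v) = nrm v.
Proof. by rewrite -scaleN1r nrmZ normrN normr1 mul1r. Qed.

Lemma ler_nrmD u v : nrm (u + v) <= nrm u + nrm v.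
Proof. by case: nrm_norm. Qed.

Lemma ler_nrm_sum (J : Type) (r : seq J) (P : pred J) (F : J -> 'rV[R]_d) :
  nrm (\sum_(j <- r | P j) F j) <= \sum_(j <- r | P j) nrm (F j).
Proof.
apply: (big_ind2 (fun u x => nrm u <= x)) => //; first by rewrite nrm0.
by move=> u x w z ux wz; apply: le_trans (ler_nrmD _ _) (lerD ux wz).
Qed.

Lemma nrm_wsum_refines_le (I : finType) (T : I -> {fset 'rV[R]_d}) (A : pred I) ys y :
  (forall i v, v \in T i -> nrm v <= 1) ->
  (forall i v, A i -> v \in T i -> (ys i v == 0) || (ys i v == 1)) ->
  refines T predT ys y ->
  nrm (wsum T A (fun _ v => v) ys - wsum T A (fun _ v => v) y) <= (nfrac T A y)%:R.
Proof.
move=> T_ball ys01 ys_y; rewrite /wsum /nfrac -sumrB natr_sum.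
apply: le_trans (ler_nrm_sum _ _ _) _; apply: ler_sum => i Ai.
rewrite -sumrB -sum1_count natr_sum [X in _ <= X]big_mkcond /=.
apply: le_trans (ler_nrm_sum _ _ _) _; rewrite big_seq [X in _ <= X]big_seq.
apply: ler_sum => v vT; rewrite -scalerBl nrmZ.
have [fv|nfv] := boolP (fractional (y i v)); last by rewrite ys_y ?subrr ?normr0 ?mul0r.
have /andP [y_gt0 y_lt1] := fv.
have dist_le1 : `|ys i v - y i v| <= 1.
  by rewrite ler_norml; case/orP: (ys01 i v Ai vT) => /eqP ->; apply/andP; split; lra.
by rewrite -[1]mulr1; apply: ler_pM; rewrite ?normr_ge0 ?nrm_ge0 ?(T_ball i v vT).
Qed.

Lemma nrm_prefix_mean_shift (N : nat) (P : pred 'I_N) (x : 'I_N -> 'rV[R]_d)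
    (T U : 'I_N -> {fset 'rV[R]_d}) (m : nat) (b : R) :
  (0 < m)%N -> (forall i, #|` U i| = m) ->
  nrm (\sum_(i | P i) (x i - fset_mean (U i))) <= 2 * d%:R * b ->
  nrm (\sum_(i | P i) (\sum_(v <- U i) v - m%:R *: fset_mean (T i))) <= 2 * d%:R ->
  nrm (\sum_(i | P i) (x i - fset_mean (T i))) <= 2 * d%:R * (b + m%:R^-1).
Proof.
move=> m_gt0 Um x_err U_err.
have m_inv_ge0 : 0 <= m%:R^-1 :> R by rewrite invr_ge0 ler0n.
have -> : \sum_(i | P i) (x i - fset_mean (T i)) = \sum_(i | P i) (x i - fset_mean (U i))
    + m%:R^-1 *: \sum_(i | P i) (\sum_(v <- U i) v - m%:R *: fset_mean (T i)).
  rewrite scaler_sumr -big_split /=; apply: eq_bigr => i _.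
  rewrite fset_sum_mean Um -scalerBr scalerA mulVf ?pnatr_eq0 -?lt0n // scale1r.
  by rewrite addrA subrK.
apply: le_trans (ler_nrmD _ _) _; rewrite nrmZ ger0_norm // mulrDr.
by rewrite lerD // [_ * nrm _]mulrC; apply: ler_wpM2r.
Qed.

End Norm.

Section BalancedSubsets.
Variables (R : realType) (d : nat) (nrm : 'rV[R]_d -> R).
Hypothesis nrm_norm : is_norm nrm.
Variables (N : nat) (T : 'I_N -> {fset 'rV[R]_d}) (s : 'I_N -> nat).
Hypotheses (T_ball : forall i v, v \in T i -> nrm v <= 1)
           (s_le : forall i, (s i <= #|` T i|)%N).

Let prefix (j : nat) (i : 'I_N) := (i < j)%N.
Let vec (_ : 'I_N) (v : 'rV[R]_d) := v.
Let target j := \sum_(i < N | (i < j)%N) (s i)%:R *: fset_mean (T i).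
Let uniform (i : 'I_N) (_ : 'rV[R]_d) : R := (s i)%:R / #|` T i|%:R.

(* y agrees with an earlier iterate y0 wherever y0 is integral, where y0 hits
   the target of the first j rows exactly with at most 2d fractional entries
   there; a 0/1 point with this property is within 2d of the target. *)
Let anchored j y := exists y0, [/\ wsum T (prefix j) vec y0 = target j,
  (nfrac T (prefix j) y0 <= 2 * d)%N & refines T predT y y0].

Let anchored_refines j y y' : anchored j y -> refines T predT y' y -> anchored j y'.
Proof.
by case=> y0 [w0 few0 ref0] ref; exists y0; split => //; exact: refines_trans ref ref0.
Qed.

Let stage k (y : 'I_N -> 'rV[R]_d -> R) := [/\ in_box T y, has_row_sums T s y,
  forall (i : 'I_N) v, (k <= i)%N -> v \in T i -> y i v = uniform i v,
  wsum T (prefix k) vec y = target k & forall j, (j <= k)%N -> anchored j y].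

Let uniform_row i : \sum_(v <- T i) uniform i v *: v = (s i)%:R *: fset_mean (T i).
Proof. by rewrite -scaler_sumr /fset_mean scalerA. Qed.

Let stage0 : stage 0 uniform.
Proof.
have wsum0 y : wsum T (prefix 0) vec y = target 0.
  by rewrite /wsum /target !big_pred0 // => i; rewrite ltn0.
split => // [i v vT|i|j].
- have T_gt0 : (0 < #|` T i|)%N by rewrite cardfs_gt0; apply/fset0Pn; exists v.
  rewrite divr_ge0 ?ler0n // ler_pdivrMr ?ltr0n // mul1r ler_nat; exact: s_le.
- rewrite (eq_bigr (fun _ => uniform i 0 *+ 1)) // sumrMnr -card_fset_sum1 -[LHS]mulr_natr.
  have [T0|T_gt0] := posnP #|` T i|; last by rewrite /uniform divfK // pnatr_eq0 -lt0n T_gt0.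
  by have := s_le i; rewrite T0 leqn0 => /eqP ->; rewrite /uniform !mulr0n mulr0.
- rewrite leqn0 => /eqP ->; exists uniform; split => //.
  by rewrite /nfrac big_pred0 // => i; rewrite ltn0.
Qed.

Let stage_succ k y : (k < N)%N -> stage k y -> exists y', stage k.+1 y'.
Proof.
move=> lt_kN [ybox yrows yunif ywsum yanch].
have wsum_next : wsum T (prefix k.+1) vec y = target k.+1.
  rewrite /wsum /target /prefix /= !(sum_prefixS lt_kN) -uniform_row.
  congr (_ + _); first exact: ywsum.
  by apply: eq_big_seq => v vT; rewrite yunif.
have [y' [box' rows' w' ref' few']] := round (prefix k.+1) vec ybox yrows.
exists y'; split => // [i v le_ki vT||j].
- by rewrite ref' ?yunif ?(ltnW le_ki) // /prefix ltnNge le_ki.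
- by rewrite w'.
rewrite leq_eqVlt => /predU1P [->|lt_jk]; first by exists y'; rewrite w'.
exact: anchored_refines (yanch j lt_jk) (refinesT ref').
Qed.

Let exists_stage k : (k <= N)%N -> exists y, stage k y.
Proof.
elim: k => [_|k IH lt_kN]; first by exists uniform; exact: stage0.
by have [y ky] := IH (ltnW lt_kN); exact: stage_succ lt_kN ky.
Qed.

Let exists_integral_rounding : exists ys, [/\
  forall i v, v \in T i -> (ys i v == 0) || (ys i v == 1),
  has_row_sums T s ys &
  forall j, (j <= N)%N -> nrm (wsum T (prefix j) vec ys - target j) <= 2 * d%:R].
Proof.
have [y [ybox yrows _ _ yanch]] := exists_stage (leqnn N).
(* With D = 0 the weighted-sum constraint is void, so no entry stays fractional. *)
have [ys [ysbox ysrows _ ys_y ys_few]] :=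
  round predT (fun _ _ => 0 : 'rV[R]_0) ybox yrows.
have nfrac0 : nfrac T predT ys = 0%N by apply/eqP; rewrite -leqn0.
have ys01 i v : v \in T i -> (ys i v == 0) || (ys i v == 1).
  exact: nfrac_eq0 ysbox nfrac0 i v isT.
exists ys; split => // j le_jN.
have [y0 [w0 few0 ref0]] := anchored_refines (yanch j le_jN) ys_y.
rewrite -w0; apply: le_trans (nrm_wsum_refines_le nrm_norm T_ball _ ref0) _.
  by move=> i v _; exact: ys01.
by rewrite -natrM ler_nat.
Qed.

Lemma exists_balanced_subsets : exists S : 'I_N -> {fset 'rV[R]_d},
  (forall i, (S i `<=` T i)%fset /\ #|` S i| = s i) /\
  forall n : 'I_N, nrm (\sum_(i < N | (i <= n)%N)
    (\sum_(v <- S i) v - (s i)%:R *: fset_mean (T i))) <= 2 * d%:R.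
Proof.
have [ys [ys01 ysrows ys_err]] := exists_integral_rounding.
exists (fun i => [fset v in T i | ys i v == 1]%fset); split=> [i|n].
  split; first exact: fset_sub.
  apply/eqP; rewrite -(eqr_nat R) card_fset_sum1 natr_sum -ysrows.
  have := sum_fset_indicator (fun _ => 1 : R^o) (ys01 i).
  by rewrite /GRing.scale /=; under [in RHS]eq_bigr do rewrite mulr1; move=> ->.
rewrite (_ : \sum_(i < N | _) _ = wsum T (prefix n.+1) vec ys - target n.+1).
  exact: ys_err.
rewrite /wsum /target -sumrB; apply: eq_big => [i|i _]; first by rewrite /prefix ltnS.
by rewrite (sum_fset_indicator _ (ys01 i)).
Qed.

End BalancedSubsets.

(* [2 d * halving_bound s] bounds the discrepancy of recursive halving on sets
   of size s.  The potential 5/2 - 1/(s-1) - 1/s absorbs the cost 1/m of every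
   part of size m <= (s+1)/2 (halving_boundS), as 1/(m-1) >= 2/(s-1). *)
Definition halving_bound (R : realFieldType) (s : nat) : R :=
  if (s <= 1)%N then 0 else 5 / 2 - (s.-1)%:R^-1 - s%:R^-1.

Lemma halving_boundS (R : realFieldType) (s m : nat) :
  (2 <= s)%N -> (0 < m)%N -> (2 * m <= s + 1)%N ->
  halving_bound R m + m%:R^-1 <= halving_bound R s.
Proof.
move=> s_ge2 m_gt0 m_half; rewrite /halving_bound [(s <= 1)%N]leqNgt s_ge2 /=.
have inv_s : s%:R^-1 <= (s.-1)%:R^-1 :> R by rewrite lef_pV2 ?posrE ?ltr0n ?ler_nat; lia.
have [m_le1|m_gt1] := leqP m 1.
  have -> : m = 1%N by lia.
  have inv_s1 : (s.-1)%:R^-1 <= 1 :> R by rewrite invf_le1 ?ler1n ?ltr0n; lia.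
  have inv_s2 : s%:R^-1 <= 2^-1 :> R.
    by rewrite lef_pV2 ?posrE ?ltr0n ?ler_nat //; lia.
  rewrite mulr1n invr1; lra.
have inv_m : 2 * (s.-1)%:R^-1 <= (m.-1)%:R^-1 :> R.
  rewrite -[2 * _]/(2 / _) ler_pdivrMr ?ltr0n; last lia.
  by rewrite mulrC ler_pdivlMr ?ltr0n -?natrM ?ler_nat; lia.
lra.
Qed.

Lemma halving_bound_le (R : realFieldType) (s : nat) :
  (0 < s)%N -> halving_bound R s + s%:R^-1 <= 5 / 2.
Proof.
move=> s_gt0; rewrite /halving_bound; case: ifP => [s_le1|_].
  have -> : s = 1%N by lia.
  rewrite mulr1n invr1; lra.
have : 0 <= (s.-1)%:R^-1 :> R by rewrite invr_ge0 ler0n.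
lra.
Qed.

Lemma r_selection_split (R : realType) (d N m n : nat) (T U W : 'I_N -> {fset 'rV[R]_d})
    (chiU : 'I_N -> 'I_m -> 'rV[R]_d) (chiW : 'I_N -> 'I_n -> 'rV[R]_d) :
  r_selection U chiU -> r_selection W chiW ->
  (forall i, U i `<=` T i)%fset -> (forall i, W i `<=` T i)%fset ->
  (forall i, [disjoint U i & W i])%fset ->
  r_selection T (fun i l => match split l with inl a => chiU i a | inr b => chiW i b end).
Proof.
move=> selU selW UT WT UW i; have [injU memU] := selU i; have [injW memW] := selW i.
split=> [l l'|l]; last first.
  by case: (split l) => a; [exact: fsubsetP (UT i) _ (memU a) | exact: fsubsetP (WT i) _ (memW a)].
case el: (split l) => [a|a]; case el': (split l') => [b|b] e;
  rewrite -[l]splitK -[l']splitK el el'.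
- by rewrite (injU _ _ e).
- by have := fdisjointP (UW i) _ (memU a); rewrite e memW.
- by have := fdisjointP (UW i) _ (memU b); rewrite -e memW.
- by rewrite (injW _ _ e).
Qed.

Lemma fset_mean_mem (R : realType) (d : nat) (A : {fset 'rV[R]_d}) :
  #|` A| = 1%N -> fset_mean A \in A.
Proof.
move/eqP/cardfs1P => [x ->].
by rewrite /fset_mean big_seq_fset1 cardfs1 invr1 scale1r fset11.
Qed.

Lemma fset_mean_selection (R : realType) (d N s : nat) (T : 'I_N -> {fset 'rV[R]_d}) :
  (s <= 1)%N -> (forall i, #|` T i| = s) -> r_selection T (fun i (_ : 'I_s) => fset_mean (T i)).
Proof.
move=> s_le1 Ts i; split=> [l l' _|l].
  by apply: ord_inj; have := ltn_ord l; have := ltn_ord l'; lia.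
by apply: fset_mean_mem; rewrite Ts; have := ltn_ord l; lia.
Qed.

Lemma fsetD_deviation (R : realType) (d m n : nat) (T U : {fset 'rV[R]_d}) :
  (U `<=` T)%fset -> #|` T| = (m + n)%N -> #|` U| = m ->
  \sum_(v <- (T `\` U)%fset) v - n%:R *: fset_mean T = - (\sum_(v <- U) v - m%:R *: fset_mean T).
Proof.
move=> UT Tmn Um.
have sumT : \sum_(v <- T) v = \sum_(v <- U) v + \sum_(v <- (T `\` U)%fset) v.
  rewrite (big_fsetID _ (mem U)); congr (_ + _); apply: eq_fbigl => v; rewrite !inE /=.
    by apply/andP/idP => [[]|vU] //; rewrite (fsubsetP UT).
  by rewrite andbC.
have : \sum_(v <- (T `\` U)%fset) v = (m + n)%:R *: fset_mean T - \sum_(v <- U) v.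
  by rewrite -Tmn -fset_sum_mean sumT addrC addKr.
by move=> ->; rewrite natrD scalerDl opprB addrAC addrK addrC.
Qed.

Section Halving.
Variables (R : realType) (d : nat) (nrm : 'rV[R]_d -> R).
Hypothesis nrm_norm : is_norm nrm.
Variable N : nat.

Lemma exists_halving_selection (s : nat) (T : 'I_N -> {fset 'rV[R]_d}) :
  (forall i, #|` T i| = s) -> (forall i v, v \in T i -> nrm v <= 1) ->
  exists chi : 'I_N -> 'I_s -> 'rV[R]_d, r_selection T chi /\
    forall (n : 'I_N) (l : 'I_s),
      nrm (\sum_(i < N | (i <= n)%N) (chi i l - fset_mean (T i)))
        <= 2 * d%:R * halving_bound R s.
Proof.
elim/ltn_ind: s T => s IH T Ts T_ball.
have [s_le1|s_gt1] := leqP s 1.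
  exists (fun i _ => fset_mean (T i)); split => [|n l]; first exact: fset_mean_selection.
  by rewrite big1 => [|i _]; rewrite ?subrr // (nrm0 nrm_norm) /halving_bound s_le1 mulr0.
have [s1 [s2 [def_s s2_gt0 s21 s12]]] : exists s1 s2,
    [/\ s = (s1 + s2)%N, (0 < s2)%N, (s2 <= s1)%N & (s1 <= s2.+1)%N].
  by exists (s - s %/ 2)%N, (s %/ 2)%N; split; lia.
subst s; have s1_gt0 : (0 < s1)%N := leq_trans s2_gt0 s21.
have s1_le i : (s1 <= #|` T i|)%N by rewrite Ts leq_addr.
have [U [UT err_U]] := exists_balanced_subsets nrm_norm T_ball (s := fun=> s1) s1_le.
pose W i := (T i `\` U i)%fset.
have Us1 i : #|` U i| = s1 by case: (UT i).
have Ws2 i : #|` W i| = s2 by rewrite cardfsDS ?Ts ?Us1; [lia | case: (UT i)].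
have U_ball i v : v \in U i -> nrm v <= 1 by move/(fsubsetP (proj1 (UT i))); exact: T_ball.
have W_ball i v : v \in W i -> nrm v <= 1 by move/(fsubsetP (fsubsetDl _ _)); exact: T_ball.
have [chiU [selU errU]] := IH s1 ltac:(lia) U Us1 U_ball.
have [chiW [selW errW]] := IH s2 ltac:(lia) W Ws2 W_ball.
have err_W (n : 'I_N) : nrm (\sum_(i < N | (i <= n)%N)
    (\sum_(v <- W i) v - s2%:R *: fset_mean (T i))) <= 2 * d%:R.
  rewrite (eq_bigr _ (fun i _ => fsetD_deviation (proj1 (UT i)) (Ts i) (Us1 i))).
  by rewrite sumrN (nrmN nrm_norm); exact: err_U.
have d2_ge0 : 0 <= 2 * d%:R :> R by rewrite mulr_ge0 ?ler0n.
exists (fun i l => match split l with inl a => chiU i a | inr b => chiW i b end); split.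
  apply: r_selection_split selU selW _ _ _ => i; first by case: (UT i).
    exact: fsubsetDl.
  by apply/fdisjointP => v vU; rewrite in_fsetD vU.
move=> n l; case: (split l) => [a|b].
  apply: le_trans (nrm_prefix_mean_shift nrm_norm s1_gt0 Us1 (errU n a) (err_U n)) _.
  by rewrite ler_wpM2l // halving_boundS //; lia.
apply: le_trans (nrm_prefix_mean_shift nrm_norm s2_gt0 Ws2 (errW n b) (err_W n)) _.
by rewrite ler_wpM2l // halving_boundS //; lia.
Qed.

End Halving.

Theorem theorem4 (R : realType) (d N r : nat) (nrm : 'rV[R]_d -> R)
  (V : 'I_N -> {fset 'rV[R]_d}) :
  (0 < d)%N -> (0 < N)%N -> (0 < r)%N ->
  is_norm nrm ->
  (forall i : 'I_N, forall v : 'rV[R]_d, v \in V i -> nrm v <= 1) ->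
  (forall i : 'I_N, (r <= #|` V i|)%N) ->
  exists chi : 'I_N -> 'I_r -> 'rV[R]_d,
    r_selection V chi /\
    forall (n : 'I_N) (l : 'I_r),
      nrm (\sum_(i : 'I_N | (i <= n)%N) (chi i l - fset_mean (V i)))
        <= 5 * d%:R.
Proof.
move=> _ _ r_gt0 nrm_norm V_ball r_le.
have [U [UV err_U]] := exists_balanced_subsets nrm_norm V_ball (s := fun=> r) r_le.
have Ur i : #|` U i| = r by case: (UV i).
have U_ball i v : v \in U i -> nrm v <= 1 by move/(fsubsetP (proj1 (UV i))); exact: V_ball.
have [chi [sel err]] := exists_halving_selection nrm_norm Ur U_ball.
exists chi; split=> [i|n l].
  by have [inj mem] := sel i; split=> // l; exact: fsubsetP (proj1 (UV i)) _ (mem l).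
apply: le_trans (nrm_prefix_mean_shift nrm_norm r_gt0 Ur (err n l) (err_U n)) _.
have := halving_bound_le R r_gt0; have : 0 <= d%:R :> R by [].
nra.
Qed.
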